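(* Every even-dimensional finite-dimensional real Lie algebra $\mathfrak g$ with $\dim[\mathfrak g,\mathfrak g]=1$ carries an abelian complex structure.
   Context: An abelian complex structure on a real Lie algebra $\mathfrak g$ is a linear map $J:\mathfrak g\to\mathfrak g$ with $J^2=-\mathrm{Id}$ and $[Jx,Jy]=[x,y]$ for all $x,y\in\mathfrak g$. *)

From HB Require Import structures.
From mathcomp Require Import all_boot all_order all_algebra.
From mathcomp Require Import reals.
Set Implicit Arguments. Unset Strict Implicit. Unset Printing Implicit Defensive.
Import Order.TTheory GRing.Theory Num.Theory.
Local Open Scope ring_scope.

Definition is_lie_bracket (R : realType) (n : nat)
  (br : 'rV[R]_n -> 'rV[R]_n -> 'rV[R]_n) : Prop :=
  [/\ (forall (a : R) x y z, br (a *: x + y) z = a *: br x z + br y z),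
      (forall (a : R) x y z, br z (a *: x + y) = a *: br z x + br z y),
      (forall x, br x x = 0) &
      (forall x y z, br x (br y z) + br y (br z x) + br z (br x y) = 0)].

(* The derived algebra [g,g], as a row space: the span of all brackets
   (by bilinearity, spanned by the brackets of standard basis vectors). *)
Definition derived_space (R : realType) (n : nat)
  (br : 'rV[R]_n -> 'rV[R]_n -> 'rV[R]_n) : 'M[R]_n :=
  (\sum_(i < n) \sum_(j < n) <<br (delta_mx 0 i) (delta_mx 0 j)>>)%MS.

Definition abelian_complex_structure (R : realType) (n : nat)
  (br : 'rV[R]_n -> 'rV[R]_n -> 'rV[R]_n) (J : 'M[R]_n) : Prop :=
  J *m J = - 1%:M /\ (forall x y, br (x *m J) (y *m J) = br x y).

From HB Require Import structures.
From mathcomp Require Import all_boot all_order all_algebra.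
From mathcomp Require Import reals perm.
(* Since [g,g] is a line R z, the bracket is [x, y] = w(x, y) z for an
   alternating bilinear form w, and J is an abelian complex structure as soon
   as J^2 = -1 and w(Jx, Jy) = w(x, y).  In even dimension such a J exists for
   every alternating form: a congruence (symplectic Gram-Schmidt) splits off a
   plane on which w is a multiple of the standard area form, where the rotation
   by a right angle works, and induction handles the complement. *)

Set Implicit Arguments. Unset Strict Implicit.
Import Order.TTheory GRing.Theory Num.Theory.
Local Open Scope ring_scope.

Lemma exists_perm_map2 (T : finType) (a b i j : T) : a != b -> i != j ->
  exists s : {perm T}, s a = i /\ s b = j.
Proof.
move=> ab ij; pose s1 := tperm a i; pose t := tperm b ((s1^-1)%g j).
exists (t * s1)%g; split; last by rewrite permM tpermL permKV.
rewrite permM [t a]tpermD ?tpermL 1?eq_sym //.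
by apply: contra ij => /eqP e; rewrite -(permKV s1 j) -e tpermL.
Qed.

Section SkewFormComplexStructure.
Variable R : numFieldType.

Definition skew_mx n (A : 'M[R]_n) := A^T = - A.

(* The matrix form of [Jx, Jy] = [x, y] when [x, y] = (x A y^T) z. *)
Definition form_complex_structure n (A J : 'M[R]_n) :=
  J *m J = - 1%:M /\ J *m A *m J^T = A.

Lemma form_complex_structure_congr n (P A J : 'M[R]_n) : P \in unitmx ->
  form_complex_structure (P *m A *m P^T) J ->
  form_complex_structure A (invmx P *m J *m P).
Proof.
move=> uP [JJ JAJ]; split.
  rewrite -!mulmxA (mulmxA P) mulmxV // mul1mx (mulmxA J) JJ.
  by rewrite mulNmx mul1mx mulmxN mulVmx.
rewrite !trmx_mul trmx_inv.
have -> : invmx P *m J *m P *m A *m (P^T *m (J^T *m invmx P^T))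
   = invmx P *m (J *m (P *m A *m P^T) *m J^T) *m invmx P^T by rewrite !mulmxA.
by rewrite JAJ !mulmxA mulVmx // mul1mx -mulmxA mulmxV ?mulmx1 // unitmx_tr.
Qed.

Definition rot2 : 'M[R]_2 := \matrix_(i, j) ((i < j)%N%:R - (j < i)%N%:R).

Lemma rot2_sqr : rot2 *m rot2 = - 1%:M.
Proof.
apply/matrixP => i j; rewrite !mxE !big_ord_recl big_ord0 !mxE.
by case: i => [[|[|i]]] //= ? ; case: j => [[|[|j]]] //= ?;
  rewrite /= ?(subr0, sub0r, mul0r, mulr0, mul1r, mulr1, add0r, addr0, oppr0, mulrN, mulNr, opprK).
Qed.

Lemma rot2_skew : skew_mx rot2.
Proof.
apply/matrixP => i j; rewrite !mxE.
by case: i => [[|[|]]] //= ? ; case: j => [[|[|]]] //= ?; rewrite ?subr0 ?sub0r ?oppr0 ?opprK.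
Qed.

Lemma form_complex_structure_block k (a : R) (S J : 'M[R]_k) :
  form_complex_structure S J ->
  form_complex_structure (block_mx (a *: rot2) 0 0 S : 'M_(2 + k))
                         (block_mx rot2 0 0 J).
Proof.
move=> [JJ JSJ]; split.
  rewrite mulmx_block !mulmx0 !mul0mx !addr0 !add0r rot2_sqr JJ.
  by rewrite [in RHS](@scalar_mx_block R 2 k 1) opp_block_mx !oppr0.
rewrite tr_block_mx !mulmx_block !trmx0 !mulmx0 !mul0mx !addr0 !add0r !mul0mx JSJ.
by rewrite rot2_skew -scalemxAr -scalemxAl rot2_sqr mulmxN mulNmx mul1mx opprK.
Qed.

Lemma skew_mx_entry n (A : 'M[R]_n) i j : skew_mx A -> A j i = - A i j.
Proof. by move=> skA; have := congr1 (fun M : 'M[R]_n => M i j) skA; rewrite !mxE. Qed.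

Lemma skew_mx_diag n (A : 'M[R]_n) i : skew_mx A -> A i i = 0.
Proof.
move/(skew_mx_entry i i)/eqP; rewrite -addr_eq0 -mulr2n mulrn_eq0 /=.
by move/eqP.
Qed.

Lemma skew_mx2 (M : 'M[R]_2) : skew_mx M -> M = M 0 1 *: rot2.
Proof.
move=> skM; apply/matrixP => i j; rewrite !mxE.
case: i => [[|[|i]]] //= hi; case: j => [[|[|j]]] //= hj; rewrite /= ?subr0 ?sub0r.
- by rewrite mulr0 (bool_irrelevance hj hi) (skew_mx_diag _ skM).
- by rewrite mulr1; congr (M _ _); apply/val_inj.
- by rewrite mulrN1 (skew_mx_entry _ _ skM); congr (- M _ _); apply/val_inj.
- by rewrite mulr0 (bool_irrelevance hj hi) (skew_mx_diag _ skM).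
Qed.

Section BlockSkew.
Variables (k : nat) (B : 'M[R]_(2 + k)).
Hypothesis skB : skew_mx B.

Lemma skew_ulsubmx : skew_mx (ulsubmx B).
Proof. by apply/matrixP => i j; rewrite !mxE; apply: skew_mx_entry. Qed.

Lemma skew_drsubmx : skew_mx (drsubmx B).
Proof. by apply/matrixP => i j; rewrite !mxE; apply: skew_mx_entry. Qed.

Lemma skew_dlsubmx : (dlsubmx B)^T = - ursubmx B.
Proof. by apply/matrixP => i j; rewrite !mxE; apply: skew_mx_entry. Qed.

Lemma skew_ursubmx : (ursubmx B)^T = - dlsubmx B.
Proof. by apply/matrixP => i j; rewrite !mxE; apply: skew_mx_entry. Qed.

(* Symplectic Gram-Schmidt step: clear the off-diagonal blocks with the
   unipotent congruence P = [1 0; X 1], where X = -B21 B11^-1. *)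
Lemma skew_mx_block_reduce : ulsubmx B 0 1 != 0 ->
  exists P S, [/\ P \in unitmx, skew_mx S &
    P *m B *m P^T = block_mx (ulsubmx B 0 1 *: rot2) 0 0 S].
Proof.
set a := ulsubmx B 0 1 => nza.
have eB11 : ulsubmx B = a *: rot2 by apply: skew_mx2; apply: skew_ulsubmx.
pose X := dlsubmx B *m (a^-1 *: rot2).
pose S := X *m ursubmx B + drsubmx B.
exists (block_mx 1%:M 0 X 1%:M), S; split.
- by rewrite unitmxE det_lblock !det1 mulr1 unitr1.
- rewrite /skew_mx /S /X linearD /= !trmx_mul skew_ursubmx skew_drsubmx.
  rewrite skew_dlsubmx linearZ /= rot2_skew.
  rewrite !mulmxN !mulNmx scalerN mulNmx mulmxN !opprK opprD.
  by rewrite !mulmxA.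
have XB : X *m ulsubmx B + dlsubmx B = 0.
  rewrite /X eB11 -mulmxA -scalemxAl -!scalemxAr scalerA mulVf //.
  by rewrite scale1r rot2_sqr mulmxN mulmx1 addNr.
have BX : ulsubmx B *m X^T + ursubmx B = 0.
  rewrite /X trmx_mul skew_dlsubmx linearZ /= rot2_skew eB11 mulmxA.
  rewrite -!scalemxAl -!scalemxAr -scalemxAl scalerA mulfV // scale1r.
  by rewrite !mulmxN rot2_sqr ?mulNmx opprK mul1mx ?opprK addNr.
rewrite -[in LHS](submxK B) tr_block_mx !mulmx_block !trmx1 !trmx0.
rewrite !mul1mx !mul0mx !mulmx1 !mulmx0 !addr0 ?add0r XB !mul0mx ?add0r ?addr0.
by rewrite BX eB11.
Qed.

End BlockSkew.

Lemma skew_mx0 n : skew_mx (0 : 'M[R]_n).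
Proof. by rewrite /skew_mx trmx0 oppr0. Qed.

Lemma skew_mx_perm n (s : 'S_n) (A : 'M[R]_n) :
  skew_mx A -> skew_mx (perm_mx s *m A *m (perm_mx s)^T).
Proof. by move=> skA; rewrite /skew_mx !trmx_mul trmxK skA mulNmx mulmxN mulmxA. Qed.

Lemma form_complex_structure_step k (A : 'M[R]_(2 + k)) :
  (forall S : 'M[R]_k, skew_mx S -> exists J, form_complex_structure S J) ->
  skew_mx A -> exists J, form_complex_structure A J.
Proof.
move=> IH skA; have [A0 | nzA] := eqVneq A 0.
  have [J J0] := IH 0 (skew_mx0 k); exists (block_mx rot2 0 0 J).
  by rewrite A0 -(block_mx0 R 2 k 2 k) -(scale0r rot2); apply: form_complex_structure_block.
have /existsP [i /existsP [j nzAij]] : [exists i, exists j, A i j != 0].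
  apply: contraR nzA => /existsPn A0; apply/eqP/matrixP => i j.
  by move/existsPn: (A0 i) => /(_ j) /negPn /eqP; rewrite mxE.
have ij : i != j by apply: contraNneq nzAij => ->; rewrite skew_mx_diag.
have [s [s0 s1]] := @exists_perm_map2 _ (lshift k 0) (lshift k 1) i j isT ij.
pose B := perm_mx s *m A *m (perm_mx s)^T.
have B01 : ulsubmx B 0 1 = A i j.
  by rewrite /B -row_permE tr_perm_mx -col_permE !mxE s0 s1.
have nzB : ulsubmx B 0 1 != 0 by rewrite B01.
have [P [S [uP skS PBP]]] := skew_mx_block_reduce (skew_mx_perm s skA) nzB.
have [J SJ] := IH S skS.
exists (invmx (P *m perm_mx s) *m block_mx rot2 0 0 J *m (P *m perm_mx s)).
apply: form_complex_structure_congr; first by rewrite unitmx_mul uP unitmx_perm.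
by rewrite trmx_mul !mulmxA -(mulmxA P) -(mulmxA P) PBP; apply: form_complex_structure_block.
Qed.

Lemma skew_mx_form_complex_structure n (A : 'M[R]_n) :
  ~~ odd n -> skew_mx A -> exists J, form_complex_structure A J.
Proof.
move=> /negbTE ev; move: A; rewrite -[n]odd_double_half ev add0n.
elim: n./2 => [|k IH] A skA.
  by exists 0; split; apply/matrixP => -[].
exact: (form_complex_structure_step IH).
Qed.

End SkewFormComplexStructure.

Lemma rank1_sub_row (F : fieldType) m n (D : 'M[F]_(m, n)) :
  \rank D = 1%N -> exists z : 'rV[F]_n, (D <= z)%MS.
Proof.
move=> rkD; have [i nzDi] : exists i, row i D != 0.
  apply/existsP; apply: contraT; rewrite negb_exists => /forallP D0.
  suff: D = 0 by move=> D0'; move: rkD; rewrite D0' mxrank0.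
  by apply/row_matrixP => i; rewrite row0; apply/eqP; move: (D0 i); rewrite negbK.
exists (row i D); have /andP[] // : (row i D == D)%MS.
by rewrite -(geq_leqif (mxrank_leqif_eq (row_sub i D))) rkD rank_rV nzDi.
Qed.

Section BilinearBracket.
Variables (F : fieldType) (n : nat) (br : 'rV[F]_n -> 'rV[F]_n -> 'rV[F]_n).
Hypothesis br_linearl : forall a x y z, br (a *: x + y) z = a *: br x z + br y z.
Hypothesis br_linearr : forall a x y z, br z (a *: x + y) = a *: br z x + br z y.

Lemma bracket_additivel w : {morph br^~ w : x y / x + y}.
Proof. by move=> x y; rewrite -[x in LHS]scale1r br_linearl scale1r. Qed.

Lemma bracket_additiver w : {morph br w : x y / x + y}.
Proof. by move=> x y; rewrite -[x in LHS]scale1r br_linearr scale1r. Qed.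

Lemma bracket0l w : br 0 w = 0.
Proof. by apply: (addrI (br 0 w)); rewrite -bracket_additivel !addr0. Qed.

Lemma bracket0r w : br w 0 = 0.
Proof. by apply: (addrI (br w 0)); rewrite -bracket_additiver !addr0. Qed.

Lemma bracketZl a x w : br (a *: x) w = a *: br x w.
Proof. by rewrite -[a *: x]addr0 br_linearl bracket0l addr0. Qed.

Lemma bracketZr a x w : br w (a *: x) = a *: br w x.
Proof. by rewrite -[a *: x]addr0 br_linearr bracket0r addr0. Qed.

Lemma bracket_suml I r (P : pred I) (G : I -> 'rV[F]_n) w :
  br (\sum_(i <- r | P i) G i) w = \sum_(i <- r | P i) br (G i) w.
Proof. exact: (big_morph _ (bracket_additivel w) (bracket0l w)). Qed.

Lemma bracket_sumr I r (P : pred I) (G : I -> 'rV[F]_n) w :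
  br w (\sum_(i <- r | P i) G i) = \sum_(i <- r | P i) br w (G i).
Proof. exact: (big_morph _ (bracket_additiver w) (bracket0r w)). Qed.

Definition bracket_coef_mx (z : 'rV[F]_n) : 'M[F]_n :=
  \matrix_(i, j) (br (delta_mx 0 i) (delta_mx 0 j) *m pinvmx z) 0 0.

Lemma bracket_coef_mxE (z : 'rV[F]_n) :
  (forall i j, (br (delta_mx 0 i) (delta_mx 0 j) <= z)%MS) ->
  forall x y, br x y = (x *m bracket_coef_mx z *m y^T) 0 0 *: z.
Proof.
move=> brz x y; have brE i j : br (delta_mx 0 i) (delta_mx 0 j) =
    bracket_coef_mx z i j *: z.
  by rewrite mxE -mul_scalar_mx -mx11_scalar mulmxKpV.
pose A := bracket_coef_mx z.
have -> : br x y = \sum_i \sum_j (x 0 i * y 0 j * A i j) *: z.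
  rewrite {1}(row_sum_delta x) bracket_suml; apply: eq_bigr => i _.
  rewrite bracketZl {1}(row_sum_delta y) bracket_sumr scaler_sumr.
  by apply: eq_bigr => j _; rewrite bracketZr brE !scalerA.
have -> : (x *m A *m y^T) 0 0 = \sum_i \sum_j (x 0 i * y 0 j * A i j).
  rewrite mxE; under eq_bigr do rewrite !mxE big_distrl.
  rewrite exchange_big; apply: eq_bigr => i _; apply: eq_bigr => j _.
  by rewrite !mxE mulrAC.
by rewrite scaler_suml; apply: eq_bigr => i _; rewrite scaler_suml.
Qed.

Hypothesis br_alt : forall x, br x x = 0.

Lemma bracket_anticomm x y : br y x = - br x y.
Proof.
move: (br_alt (x + y)).
rewrite bracket_additivel !bracket_additiver !br_alt add0r addr0.
by move/eqP; rewrite addrC addr_eq0 => /eqP.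
Qed.

Lemma bracket_coef_mx_skew z : (bracket_coef_mx z)^T = - bracket_coef_mx z.
Proof.
apply/matrixP => i j; rewrite !mxE bracket_anticomm -sumrN.
by apply: eq_bigr => k _; rewrite !mxE mulNr.
Qed.

End BilinearBracket.

Lemma bracket_sub_derived_space (R : realType) n
    (br : 'rV[R]_n -> 'rV[R]_n -> 'rV[R]_n) i j :
  (br (delta_mx 0 i) (delta_mx 0 j) <= derived_space br)%MS.
Proof.
apply: (sumsmx_sup i) => //; apply: (sumsmx_sup j) => //.
by rewrite genmxE.
Qed.

Theorem mainTheorem9 (R : realType) (n : nat)
  (br : 'rV[R]_n -> 'rV[R]_n -> 'rV[R]_n) :
  is_lie_bracket br -> ~~ odd n -> \rank (derived_space br) = 1%N ->
  exists J : 'M[R]_n, abelian_complex_structure br J.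
Proof.
move=> [linl linr alt _] ev rk1.
have [z derz] := rank1_sub_row rk1.
have brz i j : (br (delta_mx 0 i) (delta_mx 0 j) <= z)%MS.
  exact: submx_trans (bracket_sub_derived_space br i j) derz.
have skA := bracket_coef_mx_skew linl linr alt z.
have [J [JJ JAJ]] := skew_mx_form_complex_structure ev skA.
exists J; split => // x y.
rewrite !(bracket_coef_mxE linl linr brz) !trmx_mul !mulmxA.
by rewrite -(mulmxA x J) -(mulmxA x) JAJ.
Qed.
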